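(* Let $n\in\mathbb N$ and $a_1,\dots,a_n>0$ with $a_i=a_{n+1-i}$ for all $1\le i\le n$ and $a_i\le a_{i+1}$ for $1\le i<\lceil n/2\rceil$. Setting $a_0=a_{n+1}=0$, $$\max_{1\le i\le n}\frac{a_{i-1}+a_{i+1}}{a_i}\ge 2\cos\Big(\frac{\pi}{n+1}\Big).$$ *)

From Stdlib Require Import Reals Lra Lia.
Open Scope R_scope.

(* max_1_to f n = max_{1 <= i <= n} f i  (meaningful for n >= 1;
   the base case f 1 is repeated harmlessly). *)
Fixpoint max_1_to (f : nat -> R) (n : nat) : R :=
  match n with
  | O => f 1%nat
  | S m => Rmax (max_1_to f m) (f (S m))
  end.

(** The sine vector [v i = sin (i π/(n+1))] is a positive eigenvector, with
    eigenvalue [2 cos (π/(n+1))], of the path operator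
    [u ↦ (i ↦ u (i-1) + u (i+1))] with zero boundary values.  If every
    [a i > 0] satisfies [a (i-1) + a (i+1) <= M a i], pairing with [v] and
    using the self-adjointness of the operator (summation by parts) gives
    [2 cos (π/(n+1)) Σ v i a i <= M Σ v i a i], hence the bound for
    [M = max_i (a (i-1) + a (i+1)) / a i]. *)
From Stdlib Require Import Reals Lra Lia.
Open Scope R_scope.

Lemma sum_f_R0_gt0 (f : nat -> R) (N : nat) :
  (forall i, (i <= N)%nat -> 0 <= f i) -> 0 < f N -> 0 < sum_f_R0 f N.
Proof.
  intros Hge Hlast; destruct N as [|N]; simpl; [exact Hlast|].
  assert (Hinit : sum_f_R0 (fun _ => 0) N <= sum_f_R0 f N)
    by (apply sum_Rle; intros; apply Hge; lia).
  rewrite sum_cte in Hinit; lra.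
Qed.

(* At [i = 0] the truncated [0 - 1 = 0] turns the summand into the
   Casoratian at [0], so the identity holds without boundary conditions. *)
Lemma sum_neighbours_casoratian (a v : nat -> R) (n : nat) :
  sum_f_R0 (fun i => v i * (a (i - 1)%nat + a (i + 1)%nat)
                     - a i * (v (i - 1)%nat + v (i + 1)%nat)) n
  = v n * a (n + 1)%nat - a n * v (n + 1)%nat.
Proof.
  induction n as [|n IHn]; simpl; [ring|].
  rewrite IHn, Nat.sub_0_r, Nat.add_1_r; ring.
Qed.

Lemma eigenvalue_le_of_supersolution (a v : nat -> R) (n : nat) (lam M : R) :
  (1 <= n)%nat ->
  (forall i, (1 <= i <= n)%nat -> 0 < a i) ->
  (forall i, (1 <= i <= n)%nat -> 0 < v i) ->
  a 0%nat = 0 -> v 0%nat = 0 -> a (n + 1)%nat = 0 -> v (n + 1)%nat = 0 ->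
  (forall i, (1 <= i <= n)%nat -> v (i - 1)%nat + v (i + 1)%nat = lam * v i) ->
  (forall i, (1 <= i <= n)%nat -> a (i - 1)%nat + a (i + 1)%nat <= M * a i) ->
  lam <= M.
Proof.
  intros Hn Ha Hv a0 v0 an vn Heig Hsup.
  set (pairing := sum_f_R0 (fun i => v i * a i) n).
  assert (Hpairing : 0 < pairing).
  { apply sum_f_R0_gt0.
    - intros [|i] Hi; [rewrite a0; lra|].
      apply Rlt_le, Rmult_lt_0_compat; [apply Hv | apply Ha]; lia.
    - apply Rmult_lt_0_compat; [apply Hv | apply Ha]; lia. }
  assert (Hlhs : sum_f_R0 (fun i => v i * (a (i - 1)%nat + a (i + 1)%nat)
                                   - a i * (v (i - 1)%nat + v (i + 1)%nat)) n
                 = 0)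
    by (rewrite sum_neighbours_casoratian, an, vn; ring).
  assert (Hle : sum_f_R0 (fun i => v i * (a (i - 1)%nat + a (i + 1)%nat)
                                   - a i * (v (i - 1)%nat + v (i + 1)%nat)) n
                <= sum_f_R0 (fun i => v i * a i * (M - lam)) n).
  { apply sum_Rle; intros [|i] Hi.
    - simpl; rewrite a0, v0; lra.
    - rewrite Heig by lia.
      assert (0 < v (S i)) by (apply Hv; lia).
      assert (a (S i - 1)%nat + a (S i + 1)%nat <= M * a (S i))
        by (apply Hsup; lia).
      nra. }
  rewrite Hlhs, <- scal_sum in Hle; fold pairing in Hle.
  nra.
Qed.

Lemma sin_sub_add_sin_add (x t : R) : sin (x - t) + sin (x + t) = 2 * cos t * sin x.
Proof. rewrite sin_minus, sin_plus; ring. Qed.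

Definition sine_mode (n i : nat) : R := sin (INR i * (PI / INR (n + 1))).

Section SineMode.
Variable n : nat.

Let Hn1 : 0 < INR (n + 1).
Proof. apply lt_0_INR; lia. Qed.

Lemma sine_mode_0 : sine_mode n 0 = 0.
Proof. unfold sine_mode; simpl; rewrite Rmult_0_l; apply sin_0. Qed.

Lemma sine_mode_last : sine_mode n (n + 1) = 0.
Proof.
  unfold sine_mode.
  replace (INR (n + 1) * (PI / INR (n + 1))) with PI by (field; lra).
  apply sin_PI.
Qed.

Lemma sine_mode_gt0 (i : nat) : (1 <= i <= n)%nat -> 0 < sine_mode n i.
Proof.
  intros Hi; unfold sine_mode.
  assert (H0i : 0 < INR i) by (apply lt_0_INR; lia).
  assert (Hin : INR i < INR (n + 1)) by (apply lt_INR; lia).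
  pose proof PI_RGT_0.
  replace (INR i * (PI / INR (n + 1))) with (PI * (INR i / INR (n + 1)))
    by (field; lra).
  apply sin_gt_0.
  - apply Rmult_lt_0_compat; [lra | apply Rdiv_lt_0_compat; lra].
  - apply (Rmult_lt_reg_r (INR (n + 1))); [lra|].
    replace (PI * (INR i / INR (n + 1)) * INR (n + 1)) with (PI * INR i)
      by (field; lra).
    nra.
Qed.

Lemma sine_mode_eigen (i : nat) : (1 <= i)%nat ->
  sine_mode n (i - 1) + sine_mode n (i + 1)
  = 2 * cos (PI / INR (n + 1)) * sine_mode n i.
Proof.
  intros Hi; unfold sine_mode.
  set (t := PI / INR (n + 1)).
  rewrite <- sin_sub_add_sin_add, minus_INR, plus_INR by lia.
  f_equal; f_equal; simpl INR; ring.
Qed.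

End SineMode.

Lemma max_1_to_ge (f : nat -> R) (n i : nat) : (1 <= i <= n)%nat -> f i <= max_1_to f n.
Proof.
  induction n as [|n IHn]; intros Hi; [lia|]; simpl.
  destruct (Nat.eq_dec i (S n)) as [->|Hne].
  - apply Rmax_r.
  - eapply Rle_trans; [apply IHn; lia | apply Rmax_l].
Qed.

Lemma neighbours_le_max_ratio (a : nat -> R) (n i : nat) :
  (1 <= i <= n)%nat -> 0 < a i ->
  a (i - 1)%nat + a (i + 1)%nat
  <= max_1_to (fun j => (a (j - 1)%nat + a (j + 1)%nat) / a j) n * a i.
Proof.
  intros Hi Hai.
  pose proof (max_1_to_ge (fun j => (a (j - 1)%nat + a (j + 1)%nat) / a j) n i Hi)
    as Hmax; simpl in Hmax.
  apply (Rmult_le_compat_r (a i)) in Hmax; [|lra].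
  unfold Rdiv in Hmax; rewrite Rmult_assoc, Rinv_l, Rmult_1_r in Hmax; lra.
Qed.

Theorem lemma3p5 (n : nat) (a : nat -> R)
  (hn : (1 <= n)%nat)
  (hpos : forall i, (1 <= i <= n)%nat -> 0 < a i)
  (hsym : forall i, (1 <= i <= n)%nat -> a i = a (n + 1 - i)%nat)
  (hmono : forall i, (1 <= i)%nat -> (i < Nat.div (n + 1) 2)%nat -> a i <= a (S i))
  (h0 : a 0%nat = 0) (hn1 : a (n + 1)%nat = 0) :
  max_1_to (fun i => (a (i - 1)%nat + a (i + 1)%nat) / a i) n
    >= 2 * cos (PI / INR (n + 1)).
Proof.
  apply Rle_ge.
  apply (eigenvalue_le_of_supersolution a (sine_mode n) n); auto.
  - apply sine_mode_gt0.
  - apply sine_mode_0.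
  - apply sine_mode_last.
  - intros i Hi; apply sine_mode_eigen; lia.
  - intros i Hi; apply neighbours_le_max_ratio; auto.
Qed.
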